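(* Fix $d \geq 1$, permutations $\rho,\sigma \in S(d)$ and an integer $r \geq 2$. Let $\mathrm{Walk}_r(\rho,\sigma)$ be the set of $r$-tuples $W = ((s_1\ t_1),\dots,(s_r\ t_r))$ of transpositions in $S(d)$, with $s_i<t_i$, such that $\sigma = \rho (s_1\ t_1)\cdots(s_r\ t_r)$. For $1 \leq i \leq r-1$, define $R_i : \mathrm{Walk}_r(\rho,\sigma) \to \mathrm{Walk}_r(\rho,\sigma)$ as follows. $R_i W$ agrees with $W$ except in positions $i$ and $i+1$, which are replaced by $(\ast\ t_{i+1}), (\ast\ t_i)$ (in that order), where: - if $t_i < t_{i+1}$, then $(\ast\ t_{i+1}) = (s_i\ t_i)(s_{i+1}\ t_{i+1})(s_i\ t_i)$ and $(\ast\ t_i) = (s_i\ t_i)$; - if $t_i > t_{i+1}$, then $(\ast\ t_{i+1}) = (s_{i+1}\ t_{i+1})$ and $(\ast\ t_i) = (s_{i+1}\ t_{i+1})(s_i\ t_i)(s_{i+1}\ t_{i+1})$; - if $t_i = t_{i+1}$, then $R_i W = W$. Then the operators $R_i$ satisfy: - $R_i^2 = I$ for $1 \leq i \leq r-1$; - $R_iR_{i+1}R_i = R_{i+1}R_iR_{i+1}$ for $1 \leq i \leq r-2$; - $R_iR_j = R_jR_i$ for $1 \leq i,j \leq r-1$ with $|i-j| \geq 2$. Moreover, if $W$ is transitive, then so is $R_iW$.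
   Context: A transposition of $S(d)$ is written $(s\ t)$ with $s<t$. A walk $W \in \mathrm{Walk}_r(\rho,\sigma)$ is called transitive if the subgroup of $S(d)$ generated by $\rho$, $\sigma$ and the transpositions of $W$ acts transitively on $\{1,\dots,d\}$. *)

From mathcomp Require Import all_boot all_order all_fingroup.
Set Implicit Arguments. Unset Strict Implicit. Unset Printing Implicit Defensive.

Section Walks.
Variable d : nat.

Definition trans_of (p : 'I_d * 'I_d) : 'S_d := tperm p.1 p.2.

Definition is_trans_pair (p : 'I_d * 'I_d) : bool := (p.1 < p.2)%N.

Definition is_walk (r : nat) (rho sigma : 'S_d) (W : seq ('I_d * 'I_d)) : bool :=
  [&& size W == r, all is_trans_pair W &
      sigma == (rho * \prod_(p <- W) trans_of p)%g].

Definition conj_pair (a b : 'I_d * 'I_d) : 'I_d * 'I_d :=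
  odflt b [pick c : 'I_d * 'I_d |
            is_trans_pair c && (trans_of c == trans_of a * trans_of b * trans_of a)%g].

Definition swap_step (s : seq ('I_d * 'I_d)) : seq ('I_d * 'I_d) :=
  match s with
  | p :: q :: rest =>
      if (p.2 < q.2)%N then conj_pair p q :: p :: rest
      else if (q.2 < p.2)%N then q :: conj_pair q p :: rest
      else s
  | _ => s
  end.

(* R_i, for 1 <= i <= r-1 (1-based, as in the paper): acts on positions i, i+1 *)
Definition Rop (i : nat) (W : seq ('I_d * 'I_d)) : seq ('I_d * 'I_d) :=
  take i.-1 W ++ swap_step (drop i.-1 W).

Definition transitive_walk (rho sigma : 'S_d) (W : seq ('I_d * 'I_d)) : Prop :=
  [transitive <<[set rho; sigma] :|: [set trans_of p | p in W]>>, on [set: 'I_d] | 'P].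

End Walks.

(* Encode a transposition (s t), s < t, by the pair of the permutation itself and
   its larger point t.  On such pairs R_i becomes a move on two consecutive
   involutions x, y with labels a, b: if a < b they become (x y x, b), (x, a), if
   b < a they become (y, b), (y x y, a).  Since x (x y x) x = y, applying the move
   twice is the identity, and the braid and far commutation relations are direct
   computations with involutions.  The product is preserved since x y x . x = x y,
   and so is the generated subgroup, since a subgroup containing x contains x y x
   exactly when it contains y.  The encoding is injective on transposition pairs,
   so all statements transfer back to walks. *)

From mathcomp Require Import all_boot all_order all_fingroup.
From mathcomp Require Import zify.
Set Implicit Arguments. Unset Strict Implicit. Unset Printing Implicit Defensive.

Local Open Scope group_scope.

Section HurwitzMoves.
Variable gT : finGroupType.
Implicit Types (x y z : gT) (e : gT * nat) (s u v : seq (gT * nat)).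

Definition hurwitz_step s :=
  match s with
  | e1 :: e2 :: rest =>
      if (e1.2 < e2.2)%N then (e1.1 * e2.1 * e1.1, e2.2) :: e1 :: rest
      else if (e2.2 < e1.2)%N then e2 :: (e2.1 * e1.1 * e2.1, e1.2) :: rest
      else s
  | _ => s
  end.

Definition hurwitz_move k s := take k s ++ hurwitz_step (drop k s).

Definition involutive_entry e := e.1 * e.1 == 1.

Definition hurwitz_support s : {set gT} := [set x in unzip1 s].

Lemma size_hurwitz_step s : size (hurwitz_step s) = size s.
Proof. by case: s => [|e1 [|e2 s]] //=; case: ifP => _ //; case: ifP. Qed.

Lemma size_hurwitz_move k s : size (hurwitz_move k s) = size s.
Proof. by rewrite size_cat size_hurwitz_step -size_cat cat_take_drop. Qed.

Lemma hurwitz_step_cat u v : (2 <= size u)%N ->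
  hurwitz_step (u ++ v) = hurwitz_step u ++ v.
Proof. by case: u => [|e1 [|e2 u]] //= _; case: ifP => _ //; case: ifP. Qed.

Lemma hurwitz_move_small k s : (size s <= k.+1)%N -> hurwitz_move k s = s.
Proof.
move=> small; rewrite /hurwitz_move.
case def: (drop k s) => [|e1 [|e2 t]] /=; rewrite -?def ?cat_take_drop //.
by move: (size_drop k s); rewrite def /=; lia.
Qed.

Lemma hurwitz_move_catr k n u v : size u = k ->
  hurwitz_move (k + n) (u ++ v) = u ++ hurwitz_move n v.
Proof.
move=> <-; rewrite /hurwitz_move take_cat drop_cat ltnNge leq_addr /= addKn.
by rewrite catA.
Qed.

Lemma hurwitz_move_catl k u v : (k.+2 <= size u)%N ->
  hurwitz_move k (u ++ v) = hurwitz_move k u ++ v.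
Proof.
move=> su; have ku : (k < size u)%N by lia.
rewrite /hurwitz_move take_cat drop_cat ku hurwitz_step_cat ?catA //.
by rewrite size_drop; lia.
Qed.

Lemma hurwitz_move_far k l s : (k.+2 <= l)%N ->
  hurwitz_move k (hurwitz_move l s) = hurwitz_move l (hurwitz_move k s).
Proof.
move=> kl; have [short|] := leqP (size s) l.+1.
  by rewrite (hurwitz_move_small short) [RHS]hurwitz_move_small ?size_hurwitz_move.
move=> long; rewrite -(cat_take_drop l s).
have sz_take : size (take l s) = l by rewrite size_takel //; lia.
have move_l u : size u = l -> forall t, hurwitz_move l (u ++ t) = u ++ hurwitz_move 0 t.
  by move=> su t; have := hurwitz_move_catr 0 t su; rewrite addn0.
rewrite (move_l _ sz_take) !(@hurwitz_move_catl k (take l s)) ?sz_take //.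
by rewrite move_l ?size_hurwitz_move.
Qed.

Lemma involution_conjK x y : x * x = 1 -> x * (x * y * x) * x = y.
Proof. by move=> xx; rewrite !mulgA xx mul1g -mulgA xx mulg1. Qed.

Lemma hurwitz_stepK s : all involutive_entry s -> hurwitz_step (hurwitz_step s) = s.
Proof.
case: s => [|[x a] [|[y b] s]] //= /and3P[/eqP /= xx /eqP /= yy _].
have [ab|ba|->] := ltngtP a b; rewrite /= ?ab ?ba ?ltnn //.
- by rewrite ltnNge ltnW // involution_conjK.
- by rewrite involution_conjK.
Qed.

Lemma hurwitz_moveK k s : all involutive_entry s ->
  hurwitz_move k (hurwitz_move k s) = s.
Proof.
rewrite -{1}(cat_take_drop k s) all_cat => /andP[_ inv_drop].
have [short|long] := leqP (size s) k.
  by rewrite !hurwitz_move_small // ?size_hurwitz_move; lia.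
have sz_take : size (take k s) = k by rewrite size_takel //; lia.
rewrite /hurwitz_move take_cat drop_cat sz_take ltnn subnn drop0 take0 cats0.
by rewrite hurwitz_stepK // cat_take_drop.
Qed.

Lemma hurwitz_braid0 s : (3 <= size s)%N -> all involutive_entry s ->
  hurwitz_move 0 (hurwitz_move 1 (hurwitz_move 0 s)) =
  hurwitz_move 1 (hurwitz_move 0 (hurwitz_move 1 s)).
Proof.
case: s => [|[x a] [|[y b] [|[z c] s]]] // _ /and4P[/eqP /= xx /eqP /= yy /eqP /= zz _].
have cancel_r (g h : gT) : h * h = 1 -> g * h * h = g.
  by move=> hh; rewrite -mulgA hh mulg1.
rewrite /hurwitz_move /=.
repeat (case: ifP => ? /=); try (exfalso; lia).
all: rewrite ?mulgA; do 10? rewrite ?xx ?yy ?zz ?(cancel_r _ _ xx) ?(cancel_r _ _ yy)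
  ?(cancel_r _ _ zz) ?mul1g //.
Qed.

Lemma hurwitz_move_braid k s : (k + 3 <= size s)%N -> all involutive_entry s ->
  hurwitz_move k (hurwitz_move k.+1 (hurwitz_move k s)) =
  hurwitz_move k.+1 (hurwitz_move k (hurwitz_move k.+1 s)).
Proof.
move=> long; rewrite -(cat_take_drop k s) all_cat => /andP[_ inv_drop].
have sz_take : size (take k s) = k by rewrite size_takel //; lia.
have move_k n t : hurwitz_move (k + n) (take k s ++ t) = take k s ++ hurwitz_move n t.
  exact: hurwitz_move_catr.
rewrite -[k in hurwitz_move k]addn0 -addn1 !move_k hurwitz_braid0 // size_drop.
by lia.
Qed.

Lemma prod_hurwitz_step s : all involutive_entry s ->
  \prod_(e <- hurwitz_step s) e.1 = \prod_(e <- s) e.1.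
Proof.
case: s => [|[x a] [|[y b] s]] //= /and3P[/eqP /= xx /eqP /= yy _].
case: ifP => _; [|case: ifP => _ //]; rewrite !big_cons /= !mulgA.
- by rewrite -[x * y * x * x]mulgA xx mulg1.
- by rewrite yy mul1g.
Qed.

Lemma prod_hurwitz_move k s : all involutive_entry s ->
  \prod_(e <- hurwitz_move k s) e.1 = \prod_(e <- s) e.1.
Proof.
rewrite -{1}(cat_take_drop k s) all_cat => /andP[_ inv_drop].
by rewrite big_cat prod_hurwitz_step // -big_cat cat_take_drop.
Qed.

Lemma hurwitz_support_cons e s :
  hurwitz_support (e :: s) = e.1 |: hurwitz_support s.
Proof. by apply/setP => x; rewrite !inE. Qed.

Lemma hurwitz_support_cat u v :
  hurwitz_support (u ++ v) = hurwitz_support u :|: hurwitz_support v.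
Proof. by apply/setP => x; rewrite !inE /unzip1 map_cat mem_cat. Qed.

Lemma hurwitz_step_subG (G : {group gT}) s :
  (hurwitz_support (hurwitz_step s) \subset G) = (hurwitz_support s \subset G).
Proof.
case: s => [|[x a] [|[y b] s]] //=.
have conj_in g h : g \in G -> (g * h * g \in G) = (h \in G).
  by move=> gG; rewrite groupMr ?groupMl.
case: ifP => _; [|case: ifP => _ //]; rewrite !hurwitz_support_cons !subUset !sub1set /=.
- by case xG: (x \in G); [rewrite conj_in | rewrite /= andbF].
- by case yG: (y \in G); [rewrite conj_in | rewrite /= andbF].
Qed.

Lemma hurwitz_move_subG (G : {group gT}) k s :
  (hurwitz_support (hurwitz_move k s) \subset G) = (hurwitz_support s \subset G).
Proof.
by rewrite -{2}(cat_take_drop k s) !hurwitz_support_cat !subUset hurwitz_step_subG.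
Qed.

Lemma gen_hurwitz_move k s :
  <<hurwitz_support (hurwitz_move k s)>> = <<hurwitz_support s>>.
Proof.
apply/eqP; rewrite eqEsubset !gen_subG hurwitz_move_subG subset_gen.
by rewrite -(hurwitz_move_subG _ k) subset_gen.
Qed.

End HurwitzMoves.

Section TranspositionWalks.
Variable d : nat.
Implicit Types (p q : 'I_d * 'I_d) (W : seq ('I_d * 'I_d)).

Lemma trans_of_inj p q : is_trans_pair p -> is_trans_pair q ->
  trans_of p = trans_of q -> p = q.
Proof.
case: p q => [s t] [s' t']; rewrite /is_trans_pair /trans_of /= => st st' eq_tp.
have := congr1 (fun g : 'S_d => g s) eq_tp; rewrite /= tpermL.
case: tpermP => [-> | ss' | _ ss'] tt'; first by rewrite tt'.
- by move: st st'; rewrite ss' tt'; lia.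
- by move: st; rewrite tt'; lia.
Qed.

(* The transposition p q p is (p q.1, q.2), and p q.1 < q.2 since both entries of p are below q.2. *)
Lemma conj_pairP p q : is_trans_pair p -> is_trans_pair q -> (p.2 < q.2)%N ->
  [/\ is_trans_pair (conj_pair p q), (conj_pair p q).2 = q.2 &
      trans_of (conj_pair p q) = trans_of p * trans_of q * trans_of p].
Proof.
rewrite /is_trans_pair => p12 q12 pq.
pose c := (trans_of p q.1, q.2).
have c12 : is_trans_pair c by rewrite /is_trans_pair /=; case: tpermP => *; lia.
have tc : trans_of c = trans_of p * trans_of q * trans_of p.
  rewrite /c /trans_of /= -[X in _ = X * _ * _]tpermV -mulgA -conjgE tpermJ.
  by rewrite (@tpermD _ p.1 p.2 q.2) // neq_ltn ?pq ?orbT // (ltn_trans p12 pq).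
suff -> : conj_pair p q = c by [].
rewrite /conj_pair; case: pickP => [c' /andP[c'12 /eqP tc'] | no_pick] /=.
  by apply: trans_of_inj => //; rewrite tc tc'.
by move: (no_pick c); rewrite c12 tc eqxx.
Qed.

Definition trans_label p : 'S_d * nat := (trans_of p, val p.2).

Lemma swap_step_label W : all (@is_trans_pair d) W ->
  all (@is_trans_pair d) (swap_step W) /\
  map trans_label (swap_step W) = hurwitz_step (map trans_label W).
Proof.
case: W => [|p [|q W]] //= /and3P[p12 q12 W12].
case: ltngtP => [pq | qp | _] /=.
- have [c12 c2 tc] := conj_pairP p12 q12 pq.
  by rewrite c12 p12 W12 /trans_label c2 tc.
- have [c12 c2 tc] := conj_pairP q12 p12 qp.
  by rewrite c12 q12 W12 /trans_label c2 tc.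
- by rewrite p12 q12 W12.
Qed.

Lemma Rop_label i W : all (@is_trans_pair d) W ->
  all (@is_trans_pair d) (Rop i W) /\
  map trans_label (Rop i W) = hurwitz_move i.-1 (map trans_label W).
Proof.
rewrite -{1}(cat_take_drop i.-1 W) all_cat => /andP[take12 /swap_step_label[drop12 label_step]].
by rewrite /Rop all_cat take12 drop12 map_cat label_step map_take map_drop.
Qed.

Lemma all_trans_pair_Rop i W : all (@is_trans_pair d) W -> all (@is_trans_pair d) (Rop i W).
Proof. by case/(Rop_label i). Qed.

Lemma map_label_Rop i W : all (@is_trans_pair d) W ->
  map trans_label (Rop i W) = hurwitz_move i.-1 (map trans_label W).
Proof. by case/(Rop_label i). Qed.

Lemma map_label_inj W W' : all (@is_trans_pair d) W -> all (@is_trans_pair d) W' ->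
  map trans_label W = map trans_label W' -> W = W'.
Proof.
elim: W W' => [|p W IHW] [|p' W'] //= /andP[p12 W12] /andP[p'12 W'12] [tp _ lW].
by rewrite (trans_of_inj p12 p'12 tp) (IHW W').
Qed.

Lemma all_involutive_label W : all (@involutive_entry _) (map trans_label W).
Proof. by rewrite all_map; apply/allP => p _; rewrite /= /involutive_entry tperm2. Qed.

Lemma trans_of_set W : [set trans_of p | p in W] = hurwitz_support (map trans_label W).
Proof.
apply/setP => g; rewrite inE /unzip1 -map_comp.
by apply/imsetP/mapP => [[p Wp ->] | [p Wp ->]]; exists p.
Qed.

Lemma RopK i W : (0 < i)%N -> all (@is_trans_pair d) W -> Rop i (Rop i W) = W.
Proof.
move=> i_gt0 W12; apply: map_label_inj; rewrite ?all_trans_pair_Rop //.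
by rewrite !map_label_Rop ?all_trans_pair_Rop // hurwitz_moveK ?all_involutive_label.
Qed.

Lemma Rop_braid i W : (0 < i)%N -> (i.+2 <= size W)%N -> all (@is_trans_pair d) W ->
  Rop i (Rop i.+1 (Rop i W)) = Rop i.+1 (Rop i (Rop i.+1 W)).
Proof.
case: i => // k _ long W12; apply: map_label_inj; rewrite ?all_trans_pair_Rop //.
rewrite !map_label_Rop ?all_trans_pair_Rop // hurwitz_move_braid ?all_involutive_label //.
by rewrite size_map; lia.
Qed.

Lemma Rop_far i j W : (0 < i)%N -> (i.+2 <= j)%N -> all (@is_trans_pair d) W ->
  Rop i (Rop j W) = Rop j (Rop i W).
Proof.
move=> i_gt0 ij W12; apply: map_label_inj; rewrite ?all_trans_pair_Rop //.
by rewrite !map_label_Rop ?all_trans_pair_Rop // hurwitz_move_far //; lia.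
Qed.

Lemma is_walk_Rop r rho sigma i W :
  is_walk r rho sigma W -> is_walk r rho sigma (Rop i W).
Proof.
case/and3P=> /eqP <- W12 /eqP ->; apply/and3P; split.
- by rewrite -(size_map trans_label) map_label_Rop // size_hurwitz_move size_map.
- exact: all_trans_pair_Rop.
- rewrite -!(big_map trans_label xpredT (fun e => e.1)) map_label_Rop //.
  by rewrite prod_hurwitz_move ?all_involutive_label.
Qed.

Lemma gen_Rop (A : {set 'S_d}) i W : all (@is_trans_pair d) W ->
  <<A :|: [set trans_of p | p in Rop i W]>> = <<A :|: [set trans_of p | p in W]>>.
Proof.
move=> W12; rewrite !trans_of_set map_label_Rop // -!joingE -joing_idr.
by rewrite gen_hurwitz_move joing_idr.
Qed.

End TranspositionWalks.

Theorem proposition2p1 (d : nat) (hd : (1 <= d)%N) (rho sigma : 'S_d) (r : nat)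
  (hr : (2 <= r)%N) :
  (* R_i is a well-defined map Walk_r(rho,sigma) -> Walk_r(rho,sigma) *)
  (forall i, (1 <= i <= r - 1)%N -> forall W,
     is_walk r rho sigma W -> is_walk r rho sigma (Rop i W)) /\
  (* R_i^2 = I *)
  (forall i, (1 <= i <= r - 1)%N -> forall W,
     is_walk r rho sigma W -> Rop i (Rop i W) = W) /\
  (* braid relation *)
  (forall i, (1 <= i <= r - 2)%N -> forall W,
     is_walk r rho sigma W ->
     Rop i (Rop i.+1 (Rop i W)) = Rop i.+1 (Rop i (Rop i.+1 W))) /\
  (* far commutation *)
  (forall i j, (1 <= i <= r - 1)%N -> (1 <= j <= r - 1)%N ->
     (i + 2 <= j \/ j + 2 <= i)%N -> forall W,
     is_walk r rho sigma W -> Rop i (Rop j W) = Rop j (Rop i W)) /\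
  (* transitivity is preserved *)
  (forall i, (1 <= i <= r - 1)%N -> forall W,
     is_walk r rho sigma W -> transitive_walk rho sigma W ->
     transitive_walk rho sigma (Rop i W)).
Proof.
split; [|split; [|split; [|split]]].
- by move=> i _ W; apply: is_walk_Rop.
- by move=> i /andP[i_gt0 _] W /and3P[_ W12 _]; apply: RopK.
- move=> i /andP[i_gt0 i_le] W /and3P[/eqP sizeW W12 _].
  by apply: Rop_braid => //; rewrite sizeW; lia.
- move=> i j /andP[i_gt0 _] /andP[j_gt0 _] [ij|ji] W /and3P[_ W12 _].
    by rewrite Rop_far // -addn2.
  by rewrite [RHS]Rop_far // -addn2.
- by move=> i _ W /and3P[_ W12 _]; rewrite /transitive_walk gen_Rop.
Qed.
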